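(* Let $k$ be a field. Every nondegenerate variety of representations of groups over $k$ is an IBN-variety.
   Context: A representation of a group over $k$ is a two-sorted algebra ($\Gamma=\{1,2\}$): sort 1 is a group $G$ (operations: multiplication, inverse, constant $1$), sort 2 is a $k$-vector space $V$ (operations $+,0,-$ and a unary scalar multiplication by each $\lambda\in k$), and there is an action $\circ$ of type $(1,2;2)$ satisfying $g\circ(u+v)=g\circ u+g\circ v$, $g\circ(\lambda v)=\lambda(g\circ v)$, $(gh)\circ v=g\circ(h\circ v)$, $1\circ v=v$. A variety of representations of groups is a class of such representations defined by (two-sorted) identities. A two-sorted variety is nondegenerate if neither $x^{(1)}_1=x^{(1)}_2$ nor $x^{(2)}_1=x^{(2)}_2$ is an identity of it. It is an IBN-variety if for any free algebras $F(Y),F(Z)$ of the variety with finite free generating sets $Y=Y^{(1)}\uplus Y^{(2)}$, $Z=Z^{(1)}\uplus Z^{(2)}$ (split by sort), $F(Y)\cong F(Z)$ implies $|Y^{(1)}|=|Z^{(1)}|$ and $|Y^{(2)}|=|Z^{(2)}|$. *)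

From HB Require Import structures.
From mathcomp Require Import all_boot all_algebra.
Set Implicit Arguments. Unset Strict Implicit. Unset Printing Implicit Defensive.
Import GRing.Theory.
Local Open Scope ring_scope.

(* A representation of a group over k: sort 1 = group G, sort 2 = k-vector space V. *)
Record rep (k : fieldType) := Rep {
  G : Type;
  gmul : G -> G -> G;
  ginv : G -> G;
  gone : G;
  gmulA : forall x y z, gmul x (gmul y z) = gmul (gmul x y) z;
  gmul1g : forall x, gmul gone x = x;
  gmulg1 : forall x, gmul x gone = x;
  gmulVg : forall x, gmul (ginv x) x = gone;
  gmulgV : forall x, gmul x (ginv x) = gone;
  V : lmodType k;
  act : G -> V -> V;
  actD : forall g (u v : V), act g (u + v) = act g u + act g v;
  actZ : forall g (l : k) (v : V), act g (l *: v) = l *: act g v;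
  actM : forall g h (v : V), act (gmul g h) v = act g (act h v);
  act1 : forall v : V, act gone v = v
}.

Inductive gterm : Type :=
  | GVar of nat | GMul of gterm & gterm | GInv of gterm | GOne.

Inductive vterm (k : fieldType) : Type :=
  | VVar of nat
  | VAdd of vterm k & vterm k
  | VZero
  | VOpp of vterm k
  | VScale of k & vterm k
  | VAct of gterm & vterm k.

Inductive identity (k : fieldType) : Type :=
  | IdG of gterm & gterm
  | IdV of vterm k & vterm k.

Fixpoint geval k (A : rep k) (e1 : nat -> G A) (t : gterm) : G A :=
  match t with
  | GVar i => e1 i
  | GMul s u => gmul (geval e1 s) (geval e1 u)
  | GInv s => ginv (geval e1 s)
  | GOne => gone A
  end.

Fixpoint veval k (A : rep k) (e1 : nat -> G A) (e2 : nat -> V A) (t : vterm k) : V A :=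
  match t with
  | VVar i => e2 i
  | VAdd s u => veval e1 e2 s + veval e1 e2 u
  | VZero => 0
  | VOpp s => - veval e1 e2 s
  | VScale l s => l *: veval e1 e2 s
  | VAct g s => act (geval e1 g) (veval e1 e2 s)
  end.

Definition holds k (A : rep k) (i : identity k) : Prop :=
  match i with
  | IdG s t => forall (e1 : nat -> G A), geval e1 s = geval e1 t
  | IdV s t => forall (e1 : nat -> G A) (e2 : nat -> V A), veval e1 e2 s = veval e1 e2 t
  end.

Definition in_variety k (Ids : identity k -> Prop) (A : rep k) : Prop :=
  forall i, Ids i -> holds A i.

Definition is_identity_of k (Ids : identity k -> Prop) (i : identity k) : Prop :=
  forall A : rep k, in_variety Ids A -> holds A i.

Definition nondegenerate_variety k (Ids : identity k -> Prop) : Prop :=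
  ~ is_identity_of Ids (IdG k (GVar 0) (GVar 1)) /\
  ~ is_identity_of Ids (IdV (VVar k 0) (VVar k 1)).

Definition is_hom k (A B : rep k) (h1 : G A -> G B) (h2 : V A -> V B) : Prop :=
  (forall x y, h1 (gmul x y) = gmul (h1 x) (h1 y)) /\
  (forall x, h1 (ginv x) = ginv (h1 x)) /\
  h1 (gone A) = gone B /\
  (forall u v, h2 (u + v) = h2 u + h2 v) /\
  h2 0 = 0 /\
  (forall v, h2 (- v) = - h2 v) /\
  (forall (l : k) v, h2 (l *: v) = l *: h2 v) /\
  (forall g v, h2 (act g v) = act (h1 g) (h2 v)).

Definition rep_iso k (A B : rep k) : Prop :=
  exists (h1 : G A -> G B) (h2 : V A -> V B) (h1' : G B -> G A) (h2' : V B -> V A),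
    is_hom h1 h2 /\ is_hom h1' h2' /\
    (forall x, h1' (h1 x) = x) /\ (forall y, h1 (h1' y) = y) /\
    (forall v, h2' (h2 v) = v) /\ (forall w, h2 (h2' w) = w).

(* F is a free algebra of the variety with free generating set
   Y = Y1 (+) Y2, where Y1 = {y1 i | i < m} (m distinct elements of sort 1)
   and Y2 = {y2 j | j < n} (n distinct elements of sort 2). *)
Definition is_free k (Ids : identity k -> Prop) (F : rep k) (m n : nat)
    (y1 : 'I_m -> G F) (y2 : 'I_n -> V F) : Prop :=
  in_variety Ids F /\ injective y1 /\ injective y2 /\
  forall (A : rep k), in_variety Ids A ->
  forall (f1 : 'I_m -> G A) (f2 : 'I_n -> V A),
    (exists (h1 : G F -> G A) (h2 : V F -> V A),
        is_hom h1 h2 /\ (forall i, h1 (y1 i) = f1 i) /\ (forall j, h2 (y2 j) = f2 j)) /\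
    (forall (h1 h1' : G F -> G A) (h2 h2' : V F -> V A),
        is_hom h1 h2 -> is_hom h1' h2' ->
        (forall i, h1 (y1 i) = f1 i) -> (forall j, h2 (y2 j) = f2 j) ->
        (forall i, h1' (y1 i) = f1 i) -> (forall j, h2' (y2 j) = f2 j) ->
        (forall x, h1 x = h1' x) /\ (forall v, h2 v = h2' v)).

Arguments is_free {k} Ids F m n y1 y2.

Definition IBN_variety k (Ids : identity k -> Prop) : Prop :=
  forall (F F' : rep k) (m n m' n' : nat)
    (y1 : 'I_m -> G F) (y2 : 'I_n -> V F) (z1 : 'I_m' -> G F') (z2 : 'I_n' -> V F'),
    is_free Ids F m n y1 y2 -> is_free Ids F' m' n' z1 z2 -> rep_iso F F' ->
    m = m' /\ n = n'.

From HB Require Import structures.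
From mathcomp Require Import all_boot all_algebra.
From mathcomp Require Import zify.
From Stdlib Require Import Classical ClassicalEpsilon Wf_nat.
Set Implicit Arguments. Unset Strict Implicit. Unset Printing Implicit Defensive.
Import GRing.Theory.
Local Open Scope ring_scope.

(* Let F be free on m group and n vector generators and also
   (via an isomorphism, which transports freeness) on m' and n' generators.
   For any algebra B of the variety, a homomorphism F -> B is determined by
   its values on either generating set, and every assignment on the first
   generating set extends to a homomorphism; so restriction to the second
   generating set injects B^m x (V B)^n into B^m' x (V B)^n'.
   Nondegeneracy provides two test algebras in the variety:
   - a member with an element g <> 1; the identities it satisfies pass to the
     cyclic group Z/N (N >= 2 the order of g, or 2 if g has infinite order),
     acting on the zero space, and counting maps into this finite group gives
     N^m <= N^m', i.e. m <= m';
   - a member with a nonzero vector v; the line k v with trivial group is a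
     subalgebra, and the restriction map above becomes an injective linear map
     k^n -> k^n', so n <= n'.
   By symmetry m = m' and n = n'. *)

Section GroupFacts.
Variables (k : fieldType) (A : rep k).

Lemma gmulIg (a b c : G A) : gmul a c = gmul b c -> a = b.
Proof. by move=> E; rewrite -(gmulg1 a) -(gmulgV c) gmulA E -gmulA gmulgV gmulg1. Qed.

Lemma ginv_unique (a b : G A) : gmul a b = gone A -> a = ginv b.
Proof. by move=> E; rewrite -(gmulg1 a) -(gmulgV b) gmulA E gmul1g. Qed.

Lemma ginv1 : ginv (gone A) = gone A.
Proof. by rewrite -[RHS](gmulVg (gone A)) gmulg1. Qed.

End GroupFacts.

Definition is_ghom k (A B : rep k) (h : G A -> G B) : Prop :=
  [/\ forall x y, h (gmul x y) = gmul (h x) (h y),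
      forall x, h (ginv x) = ginv (h x) & h (gone A) = gone B].

Lemma hom_ghom k (A B : rep k) (h1 : G A -> G B) h2 : is_hom h1 h2 -> is_ghom h1.
Proof. by case=> [hM [hV [h1e _]]]. Qed.

Lemma geval_hom k (A B : rep k) (h : G A -> G B) : is_ghom h ->
  forall e t, h (geval e t) = geval (fun i => h (e i)) t.
Proof.
by case=> hM hV h1 e; elim=> [i|s IHs u IHu|s IHs|] //=; rewrite ?hM ?hV ?IHs ?IHu.
Qed.

Lemma veval_hom k (A B : rep k) (h1 : G A -> G B) h2 : is_hom h1 h2 ->
  forall e1 e2 t, h2 (veval e1 e2 t) = veval (fun i => h1 (e1 i)) (fun i => h2 (e2 i)) t.
Proof.
move=> hh; have hg := hom_ghom hh; case: hh => [_ [_ [_ [hD [h0 [hN [hZ hA]]]]]]] e1 e2.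
elim=> [i|s IHs u IHu||s IHs|l s IHs|x s IHs] //=;
  by rewrite ?hD ?h0 ?hN ?hZ ?hA ?IHs ?IHu ?(geval_hom hg).
Qed.

Lemma hom_comp k (A B C : rep k) (h1 : G A -> G B) h2 (k1 : G B -> G C) k2 :
  is_hom h1 h2 -> is_hom k1 k2 -> is_hom (k1 \o h1) (k2 \o h2).
Proof.
move=> [hM [hV [h1e [hD [h0 [hN [hZ hA]]]]]]] [kM [kV [k1e [kD [k0 [kN [kZ kA]]]]]]].
by do !split => * /=; rewrite ?hM ?hV ?h1e ?hD ?h0 ?hN ?hZ ?hA ?kM ?kV ?k1e ?kD ?k0 ?kN ?kZ ?kA.
Qed.

Lemma in_variety_embed k Ids (A B : rep k) (h1 : G B -> G A) h2 :
  is_hom h1 h2 -> injective h1 -> injective h2 -> in_variety Ids A -> in_variety Ids B.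
Proof.
move=> hh inj1 inj2 HA [s t|s t] /HA /= E.
- by move=> e; apply: inj1; rewrite !(geval_hom (hom_ghom hh)).
- by move=> e1 e2; apply: inj2; rewrite !(veval_hom hh).
Qed.

Lemma geval_ext k (A : rep k) (e e' : nat -> G A) t : e =1 e' -> geval e t = geval e' t.
Proof. by move=> ee'; elim: t => [i|s IHs u IHu|s IHs|] //=; rewrite ?IHs ?IHu. Qed.

(* A group identity of A passes to Q whenever Q is the image of a surjective
   homomorphism pi : P -> Q that factors through a homomorphism phi : P -> A,
   i.e. whenever Q is a quotient of the subgroup phi(P) of A. *)
Lemma group_identity_transfer k (P A Q : rep k) (phi : G P -> G A) (pi : G P -> G Q)
    (sec : G Q -> G P) :
  is_ghom phi -> is_ghom pi -> cancel sec pi ->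
  (forall x y, phi x = phi y -> pi x = pi y) ->
  forall s t, holds A (IdG k s t) -> holds Q (IdG k s t).
Proof.
move=> hphi hpi secK fibres s t E e.
have ee : e =1 fun i => pi (sec (e i)) by move=> i; rewrite secK.
rewrite !(geval_ext _ ee) -!(geval_hom hpi); apply: fibres.
by rewrite !(geval_hom hphi); apply: E.
Qed.

(* An abelian group acting on the zero space, and the trivial group acting on
   the line k: the two test algebras of the proof. *)
Definition abelian_rep k (Z : zmodType) : rep k :=
  @Rep k Z +%R -%R 0 (@addrA Z) (@add0r Z) (@addr0 Z) (@addNr Z) (@subrr Z)
    'M[k]_(0, 0) (fun _ v => v)
    (fun _ _ _ => erefl) (fun _ _ _ => erefl) (fun _ _ _ => erefl) (fun _ => erefl).

Lemma unit_eq (x y : unit) : x = y.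
Proof. by case: x; case: y. Qed.

Definition line_rep k : rep k :=
  @Rep k unit (fun _ _ => tt) (fun _ => tt) tt (fun _ _ _ => erefl)
    (fun x => unit_eq _ x) (fun x => unit_eq _ x) (fun _ => erefl) (fun _ => erefl)
    k^o (fun _ v => v)
    (fun _ _ _ => erefl) (fun _ _ _ => erefl) (fun _ _ _ => erefl) (fun _ => erefl).

Section IntegerPowers.
Variables (k : fieldType) (A : rep k) (g : G A).

Fixpoint gexpn (x : G A) (n : nat) : G A :=
  if n is n'.+1 then gmul (gexpn x n') x else gone A.

Definition gexpz (z : int) : G A :=
  match z with Posz n => gexpn g n | Negz n => gexpn (ginv g) n.+1 end.

Lemma gexpzS z : gexpz (z + 1) = gmul (gexpz z) g.
Proof.
case: z => [n|[|n]].
- by have -> : Posz n + 1 = Posz n.+1 by lia.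
- have -> : Negz 0 + 1 = 0 by lia.
  by rewrite /= gmul1g gmulVg.
- have -> : Negz n.+1 + 1 = Negz n by lia.
  by rewrite /= -gmulA gmulVg gmulg1.
Qed.

Lemma gexpzB1 z : gexpz (z - 1) = gmul (gexpz z) (ginv g).
Proof. by rewrite -[in gexpz z](subrK 1 z) gexpzS -gmulA gmulgV gmulg1. Qed.

Lemma gexpzD a b : gexpz (a + b) = gmul (gexpz a) (gexpz b).
Proof.
case: b => n; elim: n => [|n IH].
- by rewrite addr0 /= gmulg1.
- have -> : Posz n.+1 = n%:Z + 1 by lia.
  by rewrite addrA !gexpzS IH gmulA.
- have -> : Negz 0 = 0 - 1 by lia.
  by rewrite addrA addr0 !gexpzB1 /= gmul1g.
- have -> : Negz n.+1 = Negz n - 1 by lia.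
  by rewrite addrA !gexpzB1 IH -gmulA.
Qed.

Lemma gexpzN z : gexpz (- z) = ginv (gexpz z).
Proof. by apply: ginv_unique; rewrite -gexpzD addNr. Qed.

Lemma gexpz_ghom : is_ghom (A := abelian_rep k int) gexpz.
Proof. by split=> [x y|x|]; [apply: gexpzD | apply: gexpzN |]. Qed.

Lemma gexpz_mulN (N : nat) : gexpz N = gone A -> forall q : int, gexpz (q * N) = gone A.
Proof.
move=> gN.
have pos (n : nat) : gexpz (n%:Z * N) = gone A.
  elim: n => [|n IH]; first by rewrite mul0r.
  have -> : Posz n.+1 = n%:Z + 1 by lia.
  by rewrite mulrDl mul1r gexpzD IH gN gmul1g.
case=> n; first exact: pos.
by rewrite NegzE mulNr gexpzN pos ginv1.
Qed.

(* An element g <> 1 has a kernel z |-> g^z contained in N Z for some N >= 2: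
   the order of g if it is finite, and any N (say 2) otherwise. *)
Lemma gexpz_kernel : g <> gone A ->
  exists2 N : nat, (1 < N)%N & forall z, gexpz z = gone A -> (N %| z)%Z.
Proof.
move=> g1.
have [torsion|free] := classic (exists n : nat, (0 < n)%N /\ gexpz n = gone A); last first.
  exists 2%N => // z gz; suff -> : z = 0 by apply: dvdz0.
  apply: NNPP => z0; apply: free; exists `|z|%N; split; first by rewrite absz_gt0; apply/eqP.
  case: (intP z) z0 gz => // n _; rewrite ?gexpzN => gn //.
  by rewrite abszN absz_nat (ginv_unique (gmulgV (gexpz n.+1))) gn ginv1.
have [N [[[N0 gN] Nmin] _]] := dec_inh_nat_subset_has_unique_least_element _
  (fun n => classic _) torsion.
exists N => [|z gz].
  by case: N N0 gN {Nmin} => [|[|]] //= _; rewrite gmul1g => /g1.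
have r_ge0 : 0 <= (z %% N)%Z by apply: modz_ge0; lia.
have r_ltN : (z %% N)%Z < N by apply: ltz_pmod; lia.
have gr : gexpz (z %% N)%Z = gone A.
  by move: gz; rewrite {1}(divz_eq z N) gexpzD gexpz_mulN // gmul1g.
have r0 : (z %% N)%Z = 0.
  case: (z %% N)%Z r_ge0 r_ltN gr => [[|r]|r] //= _ rN gr.
  by have /leP := Nmin r.+1 (conj isT gr); lia.
by apply/dvdzP; exists (z %/ N)%Z; rewrite {1}(divz_eq z N) r0 addr0.
Qed.

End IntegerPowers.

Lemma cyclic_rep_in_variety k Ids (A : rep k) (g : G A) :
  in_variety Ids A -> g <> gone A ->
  exists N : nat, in_variety Ids (abelian_rep k 'Z_N).
Proof.
move=> HA g1; have [N N1 ker] := gexpz_kernel g1; exists N => //.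
move=> [s t|s t] /HA E; last by move=> e1 e2; rewrite [LHS]flatmx0 [RHS]flatmx0.
pose pi (z : int) : 'Z_N := z%:~R.
apply: (group_identity_transfer (P := abelian_rep k int) (Q := abelian_rep k 'Z_N)
  (gexpz_ghom g) (pi := pi) (sec := fun q : 'Z_N => Posz q)) E.
- by split=> [x y|x|]; rewrite /pi /= ?intrD ?intrN.
- by move=> q; apply: natr_Zp.
move=> x y gxy; have : gexpz g (x - y) = gone A.
  by apply: (@gmulIg _ _ _ _ (gexpz g y)); rewrite -gexpzD subrK gmul1g.
case/ker/dvdzP => q xy; apply/eqP; rewrite -subr_eq0 -intrB xy intrM.
by rewrite [N%:~R](pchar_Zp N1) mulr0.
Qed.

(* A member of the variety with a nonzero vector v contains the line k v with
   the trivial group acting on it. *)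
Lemma line_rep_in_variety k Ids (A : rep k) (v : V A) :
  in_variety Ids A -> v != 0 -> in_variety Ids (line_rep k).
Proof.
move=> HA v0.
apply: (@in_variety_embed _ _ A (line_rep k) (fun _ => gone A) (fun l : k^o => l *: v)).
- do !split => *; rewrite /= ?gmul1g ?ginv1 ?act1 ?scalerDl ?scale0r ?scaleNr ?scalerA //.
- by move=> x y _; apply: unit_eq.
- move=> l l' /eqP; rewrite -subr_eq0 -scalerBl scaler_eq0 (negbTE v0) orbF.
  by rewrite subr_eq0 => /eqP.
- exact: HA.
Qed.

Lemma nontrivial_group_witness k Ids :
  ~ is_identity_of Ids (IdG k (GVar 0) (GVar 1)) ->
  exists A : rep k, in_variety Ids A /\ exists g : G A, g <> gone A.
Proof.
move=> nid; apply: NNPP => nex; apply: nid => A HA e /=.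
apply: NNPP => ne; apply: nex; exists A; split => //.
have [e0|] := classic (e 0%N = gone A); last by exists (e 0%N).
by exists (e 1%N); rewrite -e0 => /esym.
Qed.

Lemma nonzero_vector_witness k Ids :
  ~ is_identity_of Ids (IdV (VVar k 0) (VVar k 1)) ->
  exists A : rep k, in_variety Ids A /\ exists v : V A, v != 0.
Proof.
move=> nid; apply: NNPP => nex; apply: nid => A HA e1 e2 /=.
apply/eqP; rewrite -subr_eq0; apply/negP => /negP ne; apply: nex.
by exists A; split => //; exists (e2 0%N - e2 1%N).
Qed.

Section FreeAlgebras.
Variables (k : fieldType) (Ids : identity k -> Prop).

(* Freeness is invariant under isomorphism: the preimages of the free
   generators freely generate the isomorphic copy. *)
Lemma is_free_iso (F F' : rep k) m n z1 z2 :
  rep_iso F F' -> is_free Ids F' m n z1 z2 ->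
  exists z1' z2', is_free Ids F m n z1' z2'.
Proof.
move=> [h1 [h2 [h1' [h2' [hh [hh' [h1K [h1'K [h2K h2'K]]]]]]]]] [HF' [inj1 [inj2 univ]]].
exists (h1' \o z1), (h2' \o z2); split; last split; last split.
- exact: (in_variety_embed hh (can_inj h1K) (can_inj h2K)).
- exact: inj_comp (can_inj h1'K) inj1.
- exact: inj_comp (can_inj h2'K) inj2.
move=> B HB f1 f2; have [[H1 [H2 [hH [e1 e2]]]] uniq] := univ B HB f1 f2; split.
  exists (H1 \o h1), (H2 \o h2); split; first exact: hom_comp.
  by split=> i /=; rewrite ?h1'K ?h2'K.
move=> K1 K1' K2 K2' hK hK' eK1 eK2 eK1' eK2'.
have [u1 u2] := uniq _ _ _ _ (hom_comp hh' hK) (hom_comp hh' hK') eK1 eK2 eK1' eK2'.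
by split=> x; [rewrite -(h1K x); apply: u1 | rewrite -(h2K x); apply: u2].
Qed.

Lemma free_hom_ext (F : rep k) m n (y1 : 'I_m -> G F) (y2 : 'I_n -> V F) (B : rep k)
    (h1 h1' : G F -> G B) (h2 h2' : V F -> V B) :
  is_free Ids F m n y1 y2 -> in_variety Ids B -> is_hom h1 h2 -> is_hom h1' h2' ->
  (forall i, h1 (y1 i) = h1' (y1 i)) -> (forall j, h2 (y2 j) = h2' (y2 j)) ->
  h1 =1 h1' /\ h2 =1 h2'.
Proof.
move=> [_ [_ [_ univ]]] HB hh hh' e1 e2.
have [_ uniq] := univ B HB (h1 \o y1) (h2 \o y2).
exact: uniq hh hh' (fun _ => erefl) (fun _ => erefl)
  (fun i => esym (e1 i)) (fun j => esym (e2 j)).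
Qed.

Section Lift.
Variables (F : rep k) (m n : nat) (y1 : 'I_m -> G F) (y2 : 'I_n -> V F).
Hypothesis freeF : is_free Ids F m n y1 y2.
Variables (B : rep k) (HB : in_variety Ids B).

Lemma free_lift_spec (f1 : 'I_m -> G B) (f2 : 'I_n -> V B) :
  {h : (G F -> G B) * (V F -> V B) |
    [/\ is_hom h.1 h.2, forall i, h.1 (y1 i) = f1 i & forall j, h.2 (y2 j) = f2 j]}.
Proof.
apply: constructive_indefinite_description; case: freeF => _ [_ [_ univ]].
have [[h1 [h2 [hh [e1 e2]]]] _] := univ B HB f1 f2.
by exists (h1, h2).
Qed.

Definition free_lift f1 f2 := sval (free_lift_spec f1 f2).

Lemma free_liftP f1 f2 :
  [/\ is_hom (free_lift f1 f2).1 (free_lift f1 f2).2,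
      forall i, (free_lift f1 f2).1 (y1 i) = f1 i &
      forall j, (free_lift f1 f2).2 (y2 j) = f2 j].
Proof. exact: svalP (free_lift_spec f1 f2). Qed.

Lemma free_lift_restrict_inj m' n' (z1 : 'I_m' -> G F) (z2 : 'I_n' -> V F) :
  is_free Ids F m' n' z1 z2 ->
  forall f1 f2 f1' f2',
  (forall i, (free_lift f1 f2).1 (z1 i) = (free_lift f1' f2').1 (z1 i)) ->
  (forall j, (free_lift f1 f2).2 (z2 j) = (free_lift f1' f2').2 (z2 j)) ->
  f1 =1 f1' /\ f2 =1 f2'.
Proof.
move=> freeF' f1 f2 f1' f2' e1 e2.
have [hh h1y h2y] := free_liftP f1 f2; have [hh' h1y' h2y'] := free_liftP f1' f2'.
have [u1 u2] := free_hom_ext freeF' HB hh hh' e1 e2.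
by split=> i; [rewrite -h1y -h1y' u1 | rewrite -h2y -h2y' u2].
Qed.

End Lift.
End FreeAlgebras.

(* Two free generating sets of the same algebra have comparable numbers of
   group generators: count the homomorphisms into a finite abelian group of
   the variety through each generating set. *)
Lemma free_group_rank_le k Ids (Z : finZmodType) (F : rep k) m n m' n'
    (y1 : 'I_m -> G F) (y2 : 'I_n -> V F) (z1 : 'I_m' -> G F) (z2 : 'I_n' -> V F) :
  (1 < #|Z|)%N -> in_variety Ids (abelian_rep k Z) ->
  is_free Ids F m n y1 y2 -> is_free Ids F m' n' z1 z2 -> (m <= m')%N.
Proof.
move=> Z1 HZ freeY freeZ.
pose lift (f : {ffun 'I_m -> Z}) := free_lift freeY HZ f (fun _ => 0).
pose restrict f := [ffun j => (lift f).1 (z1 j) : Z].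
have restrict_inj : injective restrict.
  move=> f f' /ffunP e; apply/ffunP.
  have agree j : (lift f).1 (z1 j) = (lift f').1 (z1 j) by have := e j; rewrite !ffunE.
  have [eq1 _] := free_lift_restrict_inj freeZ agree
    (fun j => etrans (flatmx0 _) (esym (flatmx0 _))).
  exact: eq1.
by have := leq_card restrict restrict_inj; rewrite !card_ffun !card_ord leq_exp2l.
Qed.

Lemma inj_linear_rV_le (K : fieldType) (p q : nat) (f : 'rV[K]_p -> 'rV[K]_q) :
  (forall a u v, f (a *: u + v) = a *: f u + f v) -> injective f -> (p <= q)%N.
Proof.
move=> lin inj.
have f0 : f 0 = 0 by have := lin (-1) 0 0; rewrite scaler0 addr0 scaleN1r addNr.
pose fL : {linear 'rV[K]_p -> 'rV[K]_q} := HB.pack f (GRing.isLinear.Build _ _ _ _ f lin).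
have : row_free (lin1_mx fL).
  by apply: inj_row_free => v; rewrite mul_rV_lin1 /= -f0 => /inj.
by move/eqP <-; apply: rank_leq_col.
Qed.

Lemma line_hom_lincomb k (F : rep k) (h1 h1' : G F -> G (line_rep k))
    (h2 h2' : V F -> k^o) (a : k) :
  is_hom h1 h2 -> is_hom h1' h2' -> is_hom h1 (fun w => a * h2 w + h2' w : k^o).
Proof.
move=> [_ [_ [_ [hD [h0 [hN [hZ hA]]]]]]] [_ [_ [_ [hD' [h0' [hN' [hZ' hA']]]]]]].
do 3 (split; first by move=> *; apply: unit_eq).
split; [|split; [|split; [|split]]] => [u v||v|l v|g v] /=;
  rewrite ?hD ?hD' ?h0 ?h0' ?hN ?hN' ?hZ ?hZ' ?hA ?hA' //.
- by rewrite mulrDr addrACA.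
- by rewrite mulr0 addr0.
- by rewrite mulrN opprD.
- by rewrite scalerDr scalerAr.
Qed.

(* Two free generating sets of the same algebra have comparable numbers of
   vector generators: an assignment f in k^n of the first vector generators
   into the line is determined by the values of its extension on the second
   ones, and this restriction k^n -> k^n' is linear. *)
Lemma free_vector_rank_le k Ids (F : rep k) m n m' n'
    (y1 : 'I_m -> G F) (y2 : 'I_n -> V F) (z1 : 'I_m' -> G F) (z2 : 'I_n' -> V F) :
  in_variety Ids (line_rep k) ->
  is_free Ids F m n y1 y2 -> is_free Ids F m' n' z1 z2 -> (n <= n')%N.
Proof.
move=> HL freeY freeZ.
pose lift (f : 'rV[k]_n) := free_lift freeY HL (fun _ => tt) (fun j => f 0 j : k^o).
have lift_lincomb a f f' :
    (lift (a *: f + f')).2 =1 (fun w => a * (lift f).2 w + (lift f').2 w).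
  have [hf _ ef] := free_liftP freeY HL (fun _ => tt) (fun j => f 0 j : k^o).
  have [hf' _ ef'] := free_liftP freeY HL (fun _ => tt) (fun j => f' 0 j : k^o).
  have [h _ e] := free_liftP freeY HL (fun _ => tt) (fun j => (a *: f + f') 0 j : k^o).
  have agree j : (lift (a *: f + f')).2 (y2 j) = a * (lift f).2 (y2 j) + (lift f').2 (y2 j).
    by rewrite e ef ef' !mxE.
  have [_ eq2] := free_hom_ext freeY HL h (line_hom_lincomb a hf hf')
    (fun _ => unit_eq _ _) agree.
  exact: eq2.
apply: (@inj_linear_rV_le _ _ _ (fun f => \row_j ((lift f).2 (z2 j) : k))).
  by move=> a f f'; apply/rowP => j; rewrite !mxE lift_lincomb.
move=> f f' /rowP e; apply/rowP => j.
have agree i : (lift f).2 (z2 i) = (lift f').2 (z2 i) by have := e i; rewrite !mxE.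
by have [_ ->] := free_lift_restrict_inj (freeF := freeY) (HB := HL) freeZ
  (fun _ => unit_eq _ _) agree.
Qed.

Lemma free_rank_le k Ids (F : rep k) m n m' n'
    (y1 : 'I_m -> G F) (y2 : 'I_n -> V F) (z1 : 'I_m' -> G F) (z2 : 'I_n' -> V F) :
  nondegenerate_variety Ids ->
  is_free Ids F m n y1 y2 -> is_free Ids F m' n' z1 z2 -> (m <= m')%N /\ (n <= n')%N.
Proof.
move=> [ndG ndV] freeY freeZ; split.
- have [A [HA [g g1]]] := nontrivial_group_witness ndG.
  have [N HZ] := cyclic_rep_in_variety HA g1.
  by apply: free_group_rank_le HZ freeY freeZ; rewrite card_ord.
- have [A [HA [v v0]]] := nonzero_vector_witness ndV.
  exact: free_vector_rank_le (line_rep_in_variety HA v0) freeY freeZ.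
Qed.

Theorem mainTheorem20 (k : fieldType) (Ids : identity k -> Prop) :
  nondegenerate_variety Ids -> IBN_variety Ids.
Proof.
move=> nd F F' m n m' n' y1 y2 z1 z2 freeY freeZ iso.
have [w1 [w2 freeW]] := is_free_iso iso freeZ.
have [le_mm' le_nn'] := free_rank_le nd freeY freeW.
have [le_m'm le_n'n] := free_rank_le nd freeW freeY.
by split; apply/anti_leq/andP.
Qed.
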